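(* Let $\mathfrak{M}$ be a model, $x$ a variable, $f$ any Boolean expression in $n$ arguments, $\theta,\varphi_1,\dots,\varphi_n$ formulas, $z_1,\dots,z_m$ variables distinct from $x$ none of which occurs free in $\theta$, and $Q_1,\dots,Q_m\in\{\forall,\exists\}$. If every $\varphi_i$ is non-dependent of $x$ in $\mathfrak{M}$ provided $\theta$, then $$[\![\exists x\theta\to Q_mz_m\dots Q_1z_1\,f\big(\forall x(\theta\to\varphi_1),\dots,\forall x(\theta\to\varphi_n)\big)]\!]^{\mathfrak{M}}=[\![\forall x\big(\theta\to Q_mz_m\dots Q_1z_1\,f(\varphi_1,\dots,\varphi_n)\big)]\!]^{\mathfrak{M}},$$ and hence, if moreover $\mathfrak{M}\models\exists x\theta$, then $$[\![Q_mz_m\dots Q_1z_1\,f\big(\forall x(\theta\to\varphi_1),\dots,\forall x(\theta\to\varphi_n)\big)]\!]^{\mathfrak{M}}=[\![\forall x\big(\theta\to Q_mz_m\dots Q_1z_1\,f(\varphi_1,\dots,\varphi_n)\big)]\!]^{\mathfrak{M}}.$$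
   Context: Work in first-order logic with equality over a relational signature, with countably many variables $v_1,v_2,\dots$. A model $\mathfrak{M}$ has nonempty universe $M$; assignments are $\bar a\in M^\omega$ ($a_i$ is the value of $v_i$); for $x=v_i$, $b\in M$, $\bar a^x_b$ is $\bar a$ with $i$-th entry replaced by $b$. $[\![\varphi]\!]^{\mathfrak{M}}=\{\bar a\in M^\omega:\mathfrak{M}\models\varphi[\bar a]\}$; $\mathfrak{M}\models\chi$ means every $\bar a$ satisfies $\chi$. A Boolean expression is built from its arguments using $\neg$ and $\land$ (and hence any Boolean connectives). Definition: $\varphi$ is non-dependent of $x$ in $\mathfrak{M}$ provided $\theta$ iff for all $\bar a\in M^\omega$, $b\in M$: if $\mathfrak{M}\models\theta[\bar a]$ and $\mathfrak{M}\models\theta[\bar a^x_b]$ then ($\mathfrak{M}\models\varphi[\bar a]\iff\mathfrak{M}\models\varphi[\bar a^x_b]$). *)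

From Stdlib Require Import List Arith Bool.
From Stdlib Require Fin.
Import ListNotations.

Set Implicit Arguments.

Section Syntax.
Variable Rel : Type.

Inductive form : Type :=
| FEq  : nat -> nat -> form
| FRel : Rel -> list nat -> form
| FNeg : form -> form
| FAnd : form -> form -> form
| FAll : nat -> form -> form.

Definition FEx (x : nat) (p : form) : form := FNeg (FAll x (FNeg p)).
Definition FImp (p q : form) : form := FNeg (FAnd p (FNeg q)).

Fixpoint free (y : nat) (p : form) : Prop :=
  match p with
  | FEq a b => y = a \/ y = b
  | FRel _ l => In y l
  | FNeg q => free y q
  | FAnd q r => free y q \/ free y r
  | FAll z q => y <> z /\ free y q
  end.

(* Quantifier prefix: the list [(Q_1,z_1); ...; (Q_m,z_m)] (true = forall,
   false = exists) yields  Q_m z_m ... Q_1 z_1 p. *)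
Fixpoint qprefix (qs : list (bool * nat)) (p : form) : form :=
  match qs with
  | [] => p
  | (q, z) :: qs' => qprefix qs' (if q then FAll z p else FEx z p)
  end.
End Syntax.

Arguments FEq {Rel}.
Arguments FRel {Rel}.
Arguments FNeg {Rel}.
Arguments FAnd {Rel}.
Arguments FAll {Rel}.
Arguments FEx {Rel}.
Arguments FImp {Rel}.
Arguments free {Rel}.
Arguments qprefix {Rel}.

Inductive bexp (n : nat) : Type :=
| BArg : Fin.t n -> bexp n
| BNeg : bexp n -> bexp n
| BAnd : bexp n -> bexp n -> bexp n.
Arguments BArg {n}.
Arguments BNeg {n}.
Arguments BAnd {n}.

Fixpoint bapply {Rel : Type} {n : nat} (f : bexp n) (phi : Fin.t n -> form Rel)
  : form Rel :=
  match f with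
  | BArg i => phi i
  | BNeg g => FNeg (bapply g phi)
  | BAnd g h => FAnd (bapply g phi) (bapply h phi)
  end.

Record model (Rel : Type) : Type := Model {
  dom : Type;
  dom_inhabited : dom;
  interp : Rel -> list dom -> Prop
}.

Definition update {M : Type} (a : nat -> M) (x : nat) (b : M) : nat -> M :=
  fun j => if Nat.eqb j x then b else a j.

Fixpoint sat {Rel : Type} (M : model Rel) (a : nat -> dom M) (p : form Rel)
  : Prop :=
  match p with
  | FEq i j => a i = a j
  | FRel r l => interp M r (map a l)
  | FNeg q => ~ sat M a q
  | FAnd q r => sat M a q /\ sat M a r
  | FAll x q => forall b : dom M, sat M (update a x b) q
  end.

Definition denot {Rel : Type} (M : model Rel) (p : form Rel)
  : (nat -> dom M) -> Prop := fun a => sat M a p.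

Definition models {Rel : Type} (M : model Rel) (p : form Rel) : Prop :=
  forall a, sat M a p.

Definition nondep {Rel : Type} (M : model Rel) (phi : form Rel) (x : nat)
  (theta : form Rel) : Prop :=
  forall (a : nat -> dom M) (b : dom M),
    sat M a theta -> sat M (update a x b) theta ->
    (sat M a phi <-> sat M (update a x b) phi).

(* If x is not free in P, then  (exists x theta) -> P  says the same as
   forall x (theta -> P), and it suffices to show that P and
   Q = Q_m z_m ... f(phi_1, ..., phi_n) agree on every assignment satisfying
   theta.  Non-dependence makes forall x (theta -> phi_i) equivalent to phi_i
   under theta (take the witness x := a x), the Boolean expression respects
   this pointwise equivalence, and so do the quantifiers Q_j z_j because z_j
   is not free in theta, so theta survives reassigning z_j. *)

From Stdlib Require Import List Arith Classical FunctionalExtensionality PropExtensionality.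
From Stdlib Require Fin.

Section Semantics.
Variable Rel : Type.
Variable M : model Rel.
Implicit Types (p q theta : form Rel) (a : nat -> dom M).

Lemma update_neq a x y b : y <> x -> update a x b y = a y.
Proof. intro Hyx; unfold update; now rewrite (proj2 (Nat.eqb_neq y x) Hyx). Qed.

Lemma sat_ext_free p : forall a a',
  (forall y, free y p -> a y = a' y) -> (sat M a p <-> sat M a' p).
Proof.
  induction p as [i j | r l | p IH | p IHp q IHq | z p IH]; simpl; intros a a' Ha.
  - now rewrite (Ha i (or_introl eq_refl)), (Ha j (or_intror eq_refl)).
  - now rewrite (map_ext_in a a' l) by auto.
  - now rewrite (IH a a' Ha).
  - rewrite (IHp a a'), (IHq a a'); intuition.
  - assert (Hu : forall b, sat M (update a z b) p <-> sat M (update a' z b) p).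
    { intro b; apply IH; intros y Hy; unfold update.
      destruct (Nat.eqb_spec y z); auto. }
    split; intros H b; apply Hu, H.
Qed.

Lemma sat_update_nonfree p y a b :
  ~ free y p -> (sat M (update a y b) p <-> sat M a p).
Proof.
  intro Hy; apply sat_ext_free; intros w Hw; apply update_neq.
  now intros ->.
Qed.

Lemma sat_update_self p x a : sat M (update a x (a x)) p <-> sat M a p.
Proof.
  apply sat_ext_free; intros y _; unfold update.
  destruct (Nat.eqb_spec y x); congruence.
Qed.

Lemma sat_all_imp_nondep theta phi x a :
  nondep M phi x theta -> sat M a theta ->
  (sat M a (FAll x (FImp theta phi)) <-> sat M a phi).
Proof.
  intros Hnd Ha; simpl; split.
  - intro Hall; apply NNPP; intro Hphi.
    apply (Hall (a x)); rewrite !sat_update_self; auto.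
  - intros Hphi b [Hb Hnphi]; apply Hnphi, (Hnd a b); auto.
Qed.

Lemma sat_bapply_equiv_under theta {n} (f : bexp n) (g g' : Fin.t n -> form Rel) :
  (forall i a, sat M a theta -> (sat M a (g i) <-> sat M a (g' i))) ->
  forall a, sat M a theta -> (sat M a (bapply f g) <-> sat M a (bapply f g')).
Proof.
  intros Hg a Ha; induction f as [i | f IH | f IHf h IHh]; simpl; auto.
  - now rewrite IH.
  - now rewrite IHf, IHh.
Qed.

Lemma sat_qprefix_equiv_under theta qs :
  (forall zq, In zq qs -> ~ free (snd zq) theta) ->
  forall p q, (forall a, sat M a theta -> (sat M a p <-> sat M a q)) ->
  forall a, sat M a theta -> (sat M a (qprefix qs p) <-> sat M a (qprefix qs q)).
Proof.
  induction qs as [|[all z] qs IH]; simpl; intros Hqs p q Hpq; auto.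
  apply IH; [intros; apply Hqs; auto|].
  assert (Hth : forall a b, sat M a theta -> sat M (update a z b) theta).
  { intros a b Ha; apply sat_update_nonfree; auto.
    apply (Hqs (all, z)); auto. }
  intros a Ha; destruct all; simpl.
  - split; intros H b; apply Hpq; auto.
  - split; intros Hn Hall; apply Hn; intros b Hb; apply (Hall b), Hpq; auto.
Qed.

Lemma sat_imp_ex_all theta p q x a :
  ~ free x p -> (forall c, sat M c theta -> (sat M c p <-> sat M c q)) ->
  (sat M a (FImp (FEx x theta) p) <-> sat M a (FAll x (FImp theta q))).
Proof.
  intros Hx Hpq; simpl.
  assert (Hp : forall b, sat M (update a x b) p <-> sat M a p)
    by (intro; apply sat_update_nonfree, Hx).
  split.
  - intros H b [Hb Hnq]; apply H; split.
    + intro Hno; apply (Hno b), Hb.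
    + intro Hpa; apply Hnq, Hpq, Hp; auto.
  - intros H [Hex Hnp]; apply Hex; intros b Hb; apply (H b); split; auto.
    intro Hq; apply Hnp, (Hp b), Hpq; auto.
Qed.

Lemma sat_imp_models_ex theta p x a :
  models M (FEx x theta) -> (sat M a (FImp (FEx x theta) p) <-> sat M a p).
Proof. intro Hex; specialize (Hex a); simpl in *; split; [intro; apply NNPP|]; tauto. Qed.

Lemma denot_ext p q : (forall a, sat M a p <-> sat M a q) -> denot M p = denot M q.
Proof.
  intro Hpq; extensionality a; apply propositional_extensionality, Hpq.
Qed.

End Semantics.

Lemma free_qprefix {Rel : Type} qs (p : form Rel) y :
  free y (qprefix qs p) -> free y p.
Proof.
  revert p; induction qs as [|[all z] qs IH]; simpl; intros p Hy; auto.
  apply IH in Hy; destruct all; simpl in Hy; tauto.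
Qed.

Lemma free_bapply {Rel : Type} {n} (f : bexp n) (g : Fin.t n -> form Rel) y :
  free y (bapply f g) -> exists i, free y (g i).
Proof. induction f; simpl; intros Hy; eauto; destruct Hy; auto. Qed.

Lemma not_free_qprefix_bapply_all {Rel : Type} qs {n} (f : bexp n)
  (g : Fin.t n -> form Rel) x :
  ~ free x (qprefix qs (bapply f (fun i => FAll x (g i)))).
Proof.
  intros Hx; apply free_qprefix, free_bapply in Hx as [i [Hxx _]]; auto.
Qed.

Theorem mainTheorem10 (Rel : Type) (M : model Rel) (x : nat) (n : nat)
  (f : bexp n) (theta : form Rel) (phi : Fin.t n -> form Rel)
  (qs : list (bool * nat))
  (Hz : forall p, In p qs -> snd p <> x /\ ~ free (snd p) theta)
  (Hnd : forall i, nondep M (phi i) x theta) :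
  denot M (FImp (FEx x theta)
             (qprefix qs (bapply f (fun i => FAll x (FImp theta (phi i))))))
  = denot M (FAll x (FImp theta (qprefix qs (bapply f phi))))
  /\
  (models M (FEx x theta) ->
   denot M (qprefix qs (bapply f (fun i => FAll x (FImp theta (phi i)))))
   = denot M (FAll x (FImp theta (qprefix qs (bapply f phi))))).
Proof.
  set (P := qprefix qs (bapply f (fun i => FAll x (FImp theta (phi i))))).
  assert (Hequiv : forall c, sat M c theta ->
            (sat M c P <-> sat M c (qprefix qs (bapply f phi)))).
  { apply sat_qprefix_equiv_under; [intros; apply Hz; auto|].
    apply sat_bapply_equiv_under; intros i c Hc.
    now apply sat_all_imp_nondep. }
  assert (Hmain : forall a, sat M a (FImp (FEx x theta) P) <->
                  sat M a (FAll x (FImp theta (qprefix qs (bapply f phi))))).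
  { intro a; apply sat_imp_ex_all; auto.
    apply not_free_qprefix_bapply_all. }
  split; [|intro Hex]; apply denot_ext; intro a; rewrite <- Hmain; [easy|].
  now rewrite sat_imp_models_ex.
Qed.
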